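(* For $(n,m) \in \mathbb{Z}^2$ let $q_{(n,m)}(x) = x^4 + n x^3 + m x^2 + n x + 1$, and let $Q = \{(n,m) \in \mathbb{Z}^2 : q_{(n,m)} \text{ has no real root}\}$. Then $\rho(Q) = 0$, where for $L \subseteq \mathbb{Z}^2$ $$\rho(L) = \limsup_{K \to \infty} \frac{|\{(n,m) \in L : \|(n,m)\| \le K\}|}{|\{(n,m) \in \mathbb{Z}^2 : \|(n,m)\| \le K\}|}, \qquad \|(n,m)\| = \max\{|n|,|m|\}.$$ *)

From HB Require Import structures.
From mathcomp Require Import all_boot all_order all_algebra.
From mathcomp Require Import all_classical all_reals all_analysis.
Set Implicit Arguments. Unset Strict Implicit. Unset Printing Implicit Defensive.
Import Order.TTheory GRing.Theory Num.Theory.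
Local Open Scope ring_scope.

Definition qpoly (R : realType) (n m : int) : {poly R} :=
  'X^4 + n%:~R *: 'X^3 + m%:~R *: 'X^2 + n%:~R *: 'X + 1.

Definition inQ (R : realType) (p : int * int) : Prop :=
  ~ (exists x : R, root (qpoly R p.1 p.2) x).

Definition supnorm (p : int * int) : int := Num.max `|p.1| `|p.2|.

Definition intrange (K : nat) : seq int :=
  [seq (i%:Z - K%:Z) | i <- iota 0 (2 * K).+1].

Definition ballZ2 (K : nat) : seq (int * int) :=
  [seq p <- [seq (a, b) | a <- intrange K, b <- intrange K]
     | supnorm p <= K%:Z].

Definition countL (L : int * int -> Prop) (K : nat) : nat :=
  count (fun p => `[< L p >]) (ballZ2 K).

Definition ratioL (R : realType) (L : int * int -> Prop) (K : nat) : R :=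
  (countL L K)%:R / (size (ballZ2 K))%:R.

Definition rho (R : realType) (L : int * int -> Prop) : R :=
  limn_sup (ratioL R L).

(* [q] is palindromic: [q(x) = x^2 (t^2 + n t + m - 2)] with [t = x + 1/x], and
   every real [t] with [|t| >= 2] is of this form.  When [|n| >= 4] and
   [n^2 >= 4m - 8], the root [t] of [t^2 + n t + m - 2] of sign opposite to [n]
   has [|t| >= |n|/2 >= 2], so [q] has a real root.  Hence the points of [Q] with
   [||(n,m)|| <= K] satisfy [|n| < 4] or [n^2 < 4K], that is [|n| = O(sqrt K)];
   without square roots, [|n| <= 3 + N + 4K/N] for every [N >= 1].  They are thus
   at most a fraction [O(N/K + 1/N)] of the [(2K+1)^2] points of the box. *)

From Pilot Require Import Defs.
From mathcomp Require Import all_boot all_order all_algebra.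
From mathcomp Require Import all_classical all_reals all_analysis.
From mathcomp Require Import ring lra zify.
Import Order.TTheory GRing.Theory Num.Theory.
Local Open Scope ring_scope.

Lemma mem_intrange (K : nat) (a : int) : (a \in intrange K) = (`|a| <= K%:Z).
Proof.
apply/mapP/idP => [[i] | aK].
- by rewrite mem_iota => /andP[_ iK] ->; lia.
- by exists (absz (a + K%:Z)); [rewrite mem_iota |]; lia.
Qed.

Lemma size_intrange (K : nat) : size (intrange K) = (2 * K).+1.
Proof. by rewrite size_map size_iota. Qed.

Lemma uniq_intrange (K : nat) : uniq (intrange K).
Proof. by rewrite map_inj_uniq ?iota_uniq // => i j /=; lia. Qed.

Lemma mem_ballZ2 (K : nat) (p : int * int) :
  (p \in ballZ2 K) = (supnorm p <= K%:Z).
Proof.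
rewrite mem_filter andb_idr // /supnorm ge_max => /andP[aK bK].
by case: p aK bK => a b aK bK; apply: allpairs_f; rewrite mem_intrange.
Qed.

Lemma uniq_ballZ2 (K : nat) : uniq (ballZ2 K).
Proof.
by rewrite filter_uniq // allpairs_uniq ?uniq_intrange // => -[? ?] [? ?] _ _ [-> ->].
Qed.

Lemma size_ballZ2 (K : nat) : size (ballZ2 K) = ((2 * K).+1 ^ 2)%N.
Proof.
rewrite /ballZ2; have /all_filterP -> : all (fun p => supnorm p <= K%:Z)
                          [seq (a, b) | a <- intrange K, b <- intrange K].
  apply/allP => _ /allpairsP[[a b] [/= aK bK ->]].
  by rewrite /supnorm ge_max -!mem_intrange aK bK.
by rewrite size_allpairs size_intrange.
Qed.

Lemma countL_le_strip (L : int * int -> Prop) (K B : nat) :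
  (forall p, supnorm p <= K%:Z -> L p -> `|p.1| <= B%:Z) ->
  (countL L K <= (2 * B).+1 * (2 * K).+1)%N.
Proof.
move=> strip; rewrite /countL -size_filter -(size_intrange B) -(size_intrange K).
rewrite -(size_allpairs pair) uniq_leq_size ?(filter_uniq _ (uniq_ballZ2 K)) //.
move=> [a b]; rewrite mem_filter mem_ballZ2 => /andP[/asboolP Lab abK].
have aB := strip _ abK Lab.
move: abK; rewrite /supnorm ge_max => /andP[_ bK].
by apply: allpairs_f; rewrite mem_intrange.
Qed.

Lemma ratioL_le_strip (R : realType) (L : int * int -> Prop) (K B : nat) :
  (forall p, supnorm p <= K%:Z -> L p -> `|p.1| <= B%:Z) ->
  ratioL R L K <= (2 * B).+1%:R / (2 * K).+1%:R.
Proof.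
move=> /countL_le_strip countLK; rewrite /ratioL size_ballZ2 natrX.
rewrite ler_pdivrMr ?exprn_gt0 // expr2 mulrA divfK ?pnatr_eq0 //.
by rewrite -natrM ler_nat.
Qed.

Lemma hornerE_qpoly (R : realType) (n m : int) (x : R) :
  (Defs.qpoly R n m).[x] = x ^+ 4 + n%:~R * x ^+ 3 + m%:~R * x ^+ 2 + n%:~R * x + 1.
Proof. by rewrite !hornerE. Qed.

Lemma qpoly_root_of_reduced_root (R : realType) (n m : int) (t : R) :
  4 <= t ^+ 2 -> t ^+ 2 + n%:~R * t + m%:~R - 2 = 0 ->
  exists x : R, root (Defs.qpoly R n m) x.
Proof.
move=> t2_ge4 t_root; pose s := Num.sqrt (t ^+ 2 - 4).
have s2 : s ^+ 2 = t ^+ 2 - 4 by rewrite sqr_sqrtr // subr_ge0.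
pose x := (t - s) / 2.
have x_root : x ^+ 2 - t * x + 1 = 0 by rewrite /x; nra.
have qpoly_factor : (Defs.qpoly R n m).[x] = (x ^+ 2 - t * x + 1)
    * (x ^+ 2 + (n%:~R + t) * x + 1) + (t ^+ 2 + n%:~R * t + m%:~R - 2) * x ^+ 2.
  by rewrite hornerE_qpoly; ring.
by exists x; apply/rootP; rewrite qpoly_factor x_root t_root !mul0r addr0.
Qed.

Lemma qpoly_has_root (R : realType) (n m : int) :
  4 <= `|n| -> 4 * m - 8 <= n ^+ 2 -> exists x : R, root (Defs.qpoly R n m) x.
Proof.
move=> n_ge4 disc_ge0.
have n2 : 16 <= n ^+ 2 by nia.
move: n2 disc_ge0; rewrite -!(ler_int R) expr2 intrM intrB intrM -expr2.
set a : R := n%:~R; set b : R := m%:~R => a2 disc_ge0.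
pose s := Num.sqrt (a ^+ 2 - 4 * b + 8).
have s2 : s ^+ 2 = a ^+ 2 - 4 * b + 8 by rewrite sqr_sqrtr //; lra.
have s_ge0 : 0 <= s := sqrtr_ge0 _.
have [a_ge0 | a_lt0] := lerP 0 a.
- by apply: (@qpoly_root_of_reduced_root R n m ((- a - s) / 2)); nra.
- by apply: (@qpoly_root_of_reduced_root R n m ((- a + s) / 2)); nra.
Qed.

Lemma norm_le_of_sqr_lt (a : int) (c N : nat) :
  (0 < N)%N -> a ^+ 2 < c%:Z -> `|a| <= (N + c %/ N)%:Z.
Proof.
move=> N_gt0 a2_lt; rewrite leNgt; apply/negP => a_big.
by have := ltn_ceil c N_gt0; set d := (c %/ N)%N; nia.
Qed.

Lemma inQ_fst_le (R : realType) (K N : nat) (p : int * int) :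
  (0 < N)%N -> supnorm p <= K%:Z -> inQ R p -> `|p.1| <= (3 + N + (4 * K) %/ N)%:Z.
Proof.
case: p => n m N_gt0; rewrite /supnorm ge_max => /andP[/= nK mK] nQ /=.
have [n_lt4 | n_ge4] := ltrP `|n| 4; first by set d := (_ %/ _)%N; lia.
have n2_lt : n ^+ 2 < (4 * K)%:Z.
  by rewrite ltNge; apply/negP => n2_ge; apply: nQ; apply: qpoly_has_root => /=; lia.
by have := norm_le_of_sqr_lt _ _ _ N_gt0 n2_lt; set d := (_ %/ _)%N; lia.
Qed.

Lemma ratioL_inQ_le (R : realType) (K N : nat) : (0 < N)%N ->
  ratioL R (@inQ R) K <= (2 * N%:R + 7) / (2 * K%:R + 1) + 4 / N%:R.
Proof.
move=> N_gt0; set d := ((4 * K) %/ N)%N.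
apply: le_trans (ratioL_le_strip _ _ K (3 + N + d) _) _ => [p|].
  exact: inQ_fst_le.
have dN : (d%:R * N%:R <= 4 * K%:R :> R).
  by rewrite -natrM -[4]/(4%:R) -natrM ler_nat leq_trunc_div.
have -> : (2 * (3 + N + d)).+1 = (2 * N + 7 + 2 * d)%N by lia.
have K_pos : (0 : R) < 2 * K%:R + 1 by apply: ltr_wpDl; rewrite ?mulr_ge0.
rewrite -natr1 natrD !natrM mulrDl natrD !natrM lerD2l ler_pdivrMr //.
by rewrite mulrAC ler_pdivlMr ?ltr0n //; nra.
Qed.

Import numFieldNormedType.Exports.
Local Open Scope classical_set_scope.

Theorem mainTheorem5 (R : realType) : rho R (@inQ R) = 0.
Proof.
suff /cvg_limn_inf_sup[] : ratioL R (@inQ R) @ \oo --> (0 : R) by [].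
apply/cvgrPdist_le => e e_gt0.
pose N := (Num.truncn (8 / e)).+1.
have N_large : 4 / N%:R <= e / 2.
  have := truncnS_gt (8 / e); rewrite ltr_pdivrMr // => /ltW.
  by rewrite -/N ler_pdivrMr ?ltr0Sn //; nra.
near=> K.
have K_large : (2 * N%:R + 7) / e < K%:R by near: K; exact: nbhs_infty_gtr.
rewrite sub0r normrN ger0_norm ?divr_ge0 //.
apply: le_trans (ratioL_inQ_le _ K N _) _ => //.
rewrite [e in _ <= e]splitr lerD //.
by move: K_large; rewrite ltr_pdivrMr // ler_pdivrMr //; nra.
Unshelve. all: by end_near.
Qed.
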